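(* Let $a<b$ be real numbers, let $m \ge 1$, and let $F:\mathbb{R}^m \to \mathbb{R}$ be continuous. Suppose that for every choice of subintervals $I_1,\dots,I_m \subset [a,b]$, all closed of a common positive length, such that any two of them are either identical or disjoint, we have \[ F(I_1,\dots,I_m) = F(\ddot I_1,\dots,\ddot I_m). \] Then $F(C_{a,b}^m) = F([a,b]^m)$.
   Context: For a closed interval $I=[c,c+3t]$ with $t>0$, write $\ddot I = [c,c+t]\cup[c+2t,c+3t]$ (the interval with its open middle third removed). For sets $A_1,\dots,A_m\subset\mathbb{R}$, $F(A_1,\dots,A_m)=\{F(x_1,\dots,x_m): x_i\in A_i\}$, and $F(A^m)=F(A,\dots,A)$. The Cantor set is $C=\{\sum_{k\ge1}\alpha_k3^{-k}:\alpha_k\in\{0,2\}\}$, and $C_{a,b} := a + (b-a)C = \{a+(b-a)x : x\in C\}$. *)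

From HB Require Import structures.
From mathcomp Require Import all_boot all_order all_algebra.
From mathcomp Require Import all_classical all_reals all_analysis.
Set Implicit Arguments. Unset Strict Implicit. Unset Printing Implicit Defensive.
Import Order.TTheory GRing.Theory Num.Theory.
Import numFieldNormedType.Exports.
Local Open Scope classical_set_scope.
Local Open Scope ring_scope.

Definition imF {R : realType} {m : nat} (F : 'rV[R]_m -> R) (A : 'I_m -> set R)
  : set R := [set F x | x in [set x : 'rV[R]_m | forall i, A i (x ord0 i)]].

(* For I = [c, c+3t]:  I'' = [c, c+t] \cup [c+2t, c+3t] *)
Definition ddot {R : realType} (c t : R) : set R :=
  [set` `[c, c + t]] `|` [set` `[c + 2 * t, c + 3 * t]].

Definition cantor {R : realType} : set R :=
  [set x | exists alpha : nat -> bool,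
     (fun n => \sum_(k < n) ((if alpha k then 2 else 0) / 3 ^+ k.+1 : R))
       @ \oo --> x].

Definition cantor_ab {R : realType} (a b : R) : set R :=
  [set a + (b - a) * x | x in cantor].

From HB Require Import structures.
From mathcomp Require Import all_boot all_order all_algebra.
From mathcomp Require Import all_classical all_reals all_analysis.
From mathcomp Require Import lra ring.
Import Order.TTheory GRing.Theory Num.Theory.
Import numFieldNormedType.Exports.
Local Open Scope classical_set_scope.
Local Open Scope ring_scope.

(* Take [y = F x0] with [x0] in [[a, b]^m] and apply the hypothesis with
   [t = (b - a) / 3 ^ (n + 1)] for n = 0, 1, 2, ...: a preimage of [y] whose
   coordinates lie in level-[n] Cantor intervals is replaced by one whose
   coordinates lie in level-[n + 1] intervals.  The left endpoints converge to
   a point of [C_{a,b}^m], which the preimages approach, so by continuity it is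
   again a preimage of [y]. *)

Section TernarySums.
Context {R : realType}.

Definition ternary_sum (al : nat -> bool) (n : nat) : R :=
  \sum_(k < n) ((if al k then 2 else 0) / 3 ^+ k.+1).

Lemma ternary_sumS al n :
  ternary_sum al n.+1 = ternary_sum al n + (if al n then 2 else 0) / 3 ^+ n.+1.
Proof. by rewrite /ternary_sum big_ord_recr. Qed.

Lemma invr_expr3S n : (3 ^+ n : R)^-1 = 3 * (3 ^+ n.+1)^-1.
Proof. by rewrite exprS invfM mulrA mulfV ?mul1r // pnatr_eq0. Qed.

Lemma ternary_sum_bounds al n : 0 <= ternary_sum al n <= 1 - (3 ^+ n)^-1.
Proof.
elim: n => [|n /andP[ge0 le1]].
  by rewrite /ternary_sum big_ord0 expr0 invr1 subrr lexx.
have := invr_expr3S n.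
have : 0 < (3 ^+ n.+1 : R)^-1 by rewrite invr_gt0 exprn_gt0.
rewrite ternary_sumS; case: (al n); rewrite ?mul0r => ? ?;
  by apply/andP; split; lra.
Qed.

Lemma ternary_sum_le1 al n : ternary_sum al n <= 1.
Proof.
have /andP[_] := ternary_sum_bounds al n.
have : 0 < (3 ^+ n : R)^-1 by rewrite invr_gt0 exprn_gt0.
lra.
Qed.

Lemma ternary_sum_nondecreasing al : nondecreasing_seq (ternary_sum al).
Proof.
apply/nondecreasing_seqP => n; rewrite ternary_sumS lerDl.
by case: (al n); rewrite ?mul0r // divr_ge0 // exprn_ge0.
Qed.

Lemma is_cvg_ternary_sum al : cvgn (ternary_sum al).
Proof.
apply: nondecreasing_is_cvgn; first exact: ternary_sum_nondecreasing.
by exists 1 => _ [n _ <-]; exact: ternary_sum_le1.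
Qed.

Lemma cantor_itv01 (x : R) : cantor x -> 0 <= x <= 1.
Proof.
move=> [al /cvg_lim <-] //; apply/andP; split.
  apply: limr_ge; first exact: is_cvg_ternary_sum.
  by apply: nearW => n; have /andP[] := ternary_sum_bounds al n.
apply: limr_le; first exact: is_cvg_ternary_sum.
by apply: nearW; exact: ternary_sum_le1.
Qed.

Definition cantor_len (a b : R) (n : nat) : R := (b - a) / 3 ^+ n.

Lemma cantor_len0 (a b : R) : cantor_len a b 0 = b - a.
Proof. by rewrite /cantor_len expr0 divr1. Qed.

Lemma cantor_lenS (a b : R) n : cantor_len a b n = 3 * cantor_len a b n.+1.
Proof. by rewrite /cantor_len invr_expr3S mulrCA. Qed.

Lemma cantor_len_gt0 (a b : R) n : a < b -> 0 < cantor_len a b n.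
Proof. by move=> ab; rewrite divr_gt0 ?subr_gt0 ?exprn_gt0. Qed.

Lemma cvg_cantor_len (a b : R) : cantor_len a b n @[n --> \oo] --> 0.
Proof.
have -> : cantor_len a b = fun n => (b - a) * 3^-1 ^+ n.
  by apply: funext => n; rewrite /cantor_len exprVn.
rewrite -[X in _ --> X](mulr0 (b - a)); apply: cvgM; first exact: cvg_cst.
by apply: cvg_expr; rewrite ger0_norm ?invr_ge0 // invf_lt1 // ltr1n.
Qed.

Lemma cantor_ab_sub_itv (a b : R) : a <= b -> cantor_ab a b `<=` [set` `[a, b]].
Proof.
move=> ab _ [x /cantor_itv01/andP[x0 x1] <-]; rewrite /= in_itv /=.
by apply/andP; split; nra.
Qed.

(* The ternary digits of the limit are the jumps of [c]. *)
Lemma cantor_ab_cvg (a b : R) (c : nat -> R) : c 0 = a ->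
  (forall n, c n.+1 = c n \/ c n.+1 = c n + 2 * cantor_len a b n.+1) ->
  exists2 z, cantor_ab a b z & c @ \oo --> z.
Proof.
move=> c0 jump; pose alpha k := c k.+1 != c k.
have c_sum n : c n = a + (b - a) * ternary_sum alpha n.
  elim: n => [|n IH]; first by rewrite c0 /ternary_sum big_ord0 mulr0 addr0.
  rewrite ternary_sumS /alpha; have [->|] /= := eqVneq (c n.+1) (c n).
    by rewrite IH mul0r addr0.
  by case: (jump n) => [->|-> _]; rewrite ?eqxx // IH /cantor_len; ring.
exists (a + (b - a) * lim (ternary_sum alpha @ \oo)).
  by exists (lim (ternary_sum alpha @ \oo)) => //; exists alpha;
    exact: is_cvg_ternary_sum.
rewrite (funext c_sum); apply: cvgD; first exact: cvg_cst.
by apply: cvgM; [exact: cvg_cst | exact: is_cvg_ternary_sum].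
Qed.

End TernarySums.

Lemma cvg_mx_entries {R : realType} p q T (F : set_system T) {FF : Filter F}
    (x : T -> 'M[R]_(p, q)) (z : 'M[R]_(p, q)) :
  (forall i j, x t i j @[t --> F] --> z i j) -> x @ F --> z.
Proof.
move=> xz; apply/cvgrPdist_le => /= e e0; near=> t.
rewrite /Num.Def.normr /= mx_normrE (bigmax_le _ (ltW e0)) //= => ij _.
rewrite !mxE /=; move: ij; near: t; apply: filter_forall => -[i j].
exact: (cvgrPdist_le _ _).1 (xz i j) _ e0.
Unshelve. all: by end_near.
Qed.

Lemma dependent_choice_nat (T : Type) (P : nat -> T -> Prop)
    (Q : nat -> T -> T -> Prop) (x0 : T) :
  P 0 x0 -> (forall n x, P n x -> exists y, P n.+1 y /\ Q n x y) ->
  exists f : nat -> T, f 0 = x0 /\ forall n, P n (f n) /\ Q n (f n) (f n.+1).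
Proof.
move=> P0 step.
have /choice [g gP] : forall nx : nat * T,
    exists y, P nx.1 nx.2 -> P nx.1.+1 y /\ Q nx.1 nx.2 y.
  move=> [n x] /=; have [/step [y ?]|nPx] := pselect (P n x); first by exists y.
  by exists x => /nPx.
pose f := fix f n := if n is k.+1 then g (k, f k) else x0.
have fP n : P n (f n) by elim: n => // n IH; exact: (gP (n, f n) IH).1.
by exists f; split=> // n; split; [exact: fP | exact: (gP (n, f n) (fP n)).2].
Qed.

Lemma imF_subset {R : realType} m (F : 'rV[R]_m -> R) (A B : 'I_m -> set R) :
  (forall i, A i `<=` B i) -> imF F A `<=` imF F B.
Proof. by move=> AB _ [x Ax <-]; exists x => // i; exact/AB/Ax. Qed.

Lemma itvcc_disjoint {R : realType} (u v s : R) : s < `|u - v| ->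
  [set` `[u, u + s]] `&` [set` `[v, v + s]] = set0.
Proof.
move=> uv; apply/seteqP; split => // w [] /=; rewrite !in_itv /=.
by move=> /andP[? ?] /andP[? ?]; move: uv; rewrite ltr_normr => /orP[]; lra.
Qed.

Lemma ddot_subinterval {R : realType} (c t x : R) : ddot c t x ->
  exists c', (c' = c \/ c' = c + 2 * t) /\ c' <= x <= c' + t.
Proof.
case=> /=; rewrite in_itv /= => xc; first by exists c; split; [left|].
exists (c + 2 * t); split; first by right.
by move: xc => /andP[? ?]; apply/andP; split; lra.
Qed.

Lemma separation_shift {R : realType} (t u v u' v' : R) : 0 <= t ->
  (u' = u \/ u' = u + 2 * t) -> (v' = v \/ v' = v + 2 * t) ->
  u = v \/ 2 * (3 * t) <= `|u - v| -> u' = v' \/ 2 * t <= `|u' - v'|.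
Proof.
move=> t0 [->|->] [->|->] [->|]; rewrite ?ler_normr;
  try by [left | right; apply/orP; (left; lra) || (right; lra)].
all: by move=> /orP[] ?; right; apply/orP; (left; lra) || (right; lra).
Qed.

Section CantorReduction.
Variables (R : realType) (a b : R) (m : nat) (F : 'rV[R]_m -> R).
Hypothesis ab : a < b.
Hypothesis F_cont : continuous F.
Hypothesis imF_ddot : forall (c : 'I_m -> R) (t : R), 0 < t ->
  (forall i, a <= c i /\ c i + 3 * t <= b) ->
  (forall i j, c i = c j \/
     [set` `[c i, c i + 3 * t]] `&` [set` `[c j, c j + 3 * t]] = set0) ->
  imF F (fun i => [set` `[c i, c i + 3 * t]]) = imF F (fun i => ddot (c i) t).

Local Notation L := (cantor_len a b).

(* The separation [2 * L n] (rather than [L n]) is what survives one step of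
   the construction, and it makes the intervals [[c i, c i + L n]] pairwise
   equal or disjoint, as the hypothesis requires. *)
Definition cantor_stage n (c : 'I_m -> R) (x : 'rV[R]_m) : Prop :=
  [/\ forall i, a <= c i /\ c i + L n <= b,
      forall i, c i <= x ord0 i <= c i + L n &
      forall i j, c i = c j \/ 2 * L n <= `|c i - c j|].

Lemma cantor_stage0 (x : 'rV[R]_m) : (forall i, a <= x ord0 i <= b) ->
  cantor_stage 0 (fun=> a) x.
Proof.
by move=> xab; rewrite /cantor_stage cantor_len0; split=> [i|i|i j];
  [split; lra | rewrite addrC subrK; exact: xab | left].
Qed.

Lemma cantor_stage_step n (c : 'I_m -> R) (x : 'rV[R]_m) :
  cantor_stage n c x ->
  exists c' x', [/\ cantor_stage n.+1 c' x', F x' = F x &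
    forall i, c' i = c i \/ c' i = c i + 2 * L n.+1].
Proof.
move=> [cab xc sep]; have Lt := cantor_lenS a b n.
have t0 : 0 < L n.+1 by exact: cantor_len_gt0.
set t := L n.+1 in Lt t0 *.
have : imF F (fun i => ddot (c i) t) (F x).
  rewrite -imF_ddot // => [|i|i j].
  - by exists x => // i; rewrite /= in_itv /= -Lt.
  - by rewrite -Lt.
  - by have [->|gap] := sep i j; [left | right; apply: itvcc_disjoint; lra].
case=> x' x'ddot Fx'.
have /choice [c' c'P] := fun i => @ddot_subinterval _ _ _ _ (x'ddot i).
exists c', x'; split=> // [|i]; last exact: (c'P i).1.
rewrite /cantor_stage -/t; split=> [i|i|i j].
- by case: (cab i) (c'P i) => ? ? [[] -> _]; split; lra.
- exact: (c'P i).2.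
- apply: (separation_shift _ _ _ _ _ (ltW t0) (c'P i).1 (c'P j).1).
  by rewrite -Lt; exact: sep.
Qed.

Lemma imF_itv_sub_cantor :
  imF F (fun=> [set` `[a, b]]) `<=` imF F (fun=> cantor_ab a b).
Proof.
move=> _ [x0 x0ab <-].
have [||s [s0 sP]] := @dependent_choice_nat _
  (fun n s => cantor_stage n s.1 s.2 /\ F s.2 = F x0)
  (fun n s s' => forall i, s'.1 i = s.1 i \/ s'.1 i = s.1 i + 2 * L n.+1)
  ((fun=> a), x0) _ _.
- split=> //; apply: cantor_stage0 => i; have := x0ab i; by rewrite /= in_itv.
- move=> n [c x] [/cantor_stage_step [c' [x' [stage' Fx' jump]]] Fx].
  by exists (c', x'); rewrite /= Fx' Fx.
have /choice [z zP] : forall i,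
    exists z, cantor_ab a b z /\ (fun n => (s n).1 i) @ \oo --> z.
  move=> i; have [|n|z Cz cz] := @cantor_ab_cvg _ a b (fun n => (s n).1 i).
  - by rewrite s0.
  - exact: (sP n).2 i.
  by exists z.
have xz : (fun n => (s n).2) @ \oo --> \row_i z i.
  apply: cvg_mx_entries => i0 i; rewrite (ord1 i0) mxE.
  apply: (@squeeze_cvgr _ _ _ _
    (fun n => (s n).1 i) (fun n => (s n).1 i + L n)).
  - by apply: nearW => n; have [[[_ xc _] _] _] := sP n; exact: xc.
  - exact: (zP i).2.
  - rewrite -[z i]addr0; apply: cvgD; first exact: (zP i).2.
    exact: cvg_cantor_len.
exists (\row_i z i) => [i|]; first by rewrite mxE; exact: (zP i).1.
have Fs_cvg : (F \o (fun n => (s n).2)) @ \oo --> F (\row_i z i).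
  by apply: continuous_cvg; [exact: F_cont | exact: xz].
have Fs_cst : F \o (fun n => (s n).2) = fun=> F x0.
  by apply: funext => n; exact: (sP n).1.2.
by rewrite Fs_cst in Fs_cvg; exact: cvg_unique _ Fs_cvg (cvg_cst _).
Qed.

End CantorReduction.

Theorem lemma2p2 (R : realType) (a b : R) (m : nat) (F : 'rV[R]_m -> R) :
  a < b -> (0 < m)%N -> continuous F ->
  (forall (c : 'I_m -> R) (t : R), 0 < t ->
     (forall i, a <= c i /\ c i + 3 * t <= b) ->
     (forall i j, c i = c j \/
        [set` `[c i, c i + 3 * t]] `&` [set` `[c j, c j + 3 * t]] = set0) ->
     imF F (fun i => [set` `[c i, c i + 3 * t]]) = imF F (fun i => ddot (c i) t)) ->
  imF F (fun _ => cantor_ab a b) = imF F (fun _ => [set` `[a, b]]).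
Proof.
move=> ab _ F_cont imF_ddot; apply/seteqP; split.
  by apply: imF_subset => _; exact: cantor_ab_sub_itv (ltW ab).
exact: imF_itv_sub_cantor.
Qed.
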